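(* Let $U_{L}:=F_{\mathbf{i}}^{(\boldsymbol n)}\otimes I_{s}$ and $U_{R}:=F_{\mathbf{i}}^{(\boldsymbol n)}\otimes I_{t}$. Define, for $\ell=0,1,2,3$, \[ \Lambda_{\ell}:=\mathrm{blockdiag}\bigl(\widehat S_{\ell}(\boldsymbol k)\bigr)_{\boldsymbol k\in\Lambda_{\boldsymbol n}}, \qquad \widehat S_{\ell}(\boldsymbol k)=\sum_{\boldsymbol\rho\in \mathcal F}p_{\mathrm R}(\boldsymbol\rho)^{(\ell)}\,e^{-2\pi \mathbf{i}\sum_{\ell'=1}^{d} k_{\ell'}\rho_{\ell'}/n_{\ell'}}, \] where $\mathrm{blockdiag}$ denotes the block-diagonal matrix (ordered lexicographically in $\boldsymbol k$) with $s\times t$ diagonal blocks. Then \[ U_{L}\,C_{\boldsymbol n}\bigl(p_{\mathrm{R}}\bigr)\,U_{R}^{*} =\Lambda_{0}+\Lambda_{1}\,\mathbf{i}+\Lambda_{2}\,(A_{\boldsymbol n}\otimes I_{t})\,\mathbf{j} +\Lambda_{3}\,(A_{\boldsymbol n}\otimes I_{t})\,(\mathbf{i}\mathbf{j}). \] Moreover, with $\Pi_{L}:=P\otimes I_{s}$, $\Pi_{R}:=P\otimes I_{t}$, one has the block direct sum \[ \Pi_{L}U_{L}\,C_{\boldsymbol n}\bigl(p_{\mathrm{R}}\bigr)\,U_{R}^{*}\Pi_{R}^{*} =\bigoplus_{\boldsymbol k\in\mathrm{Fix}} \bigl( D_{1}(\boldsymbol k) +D_2(\boldsymbol k) \bigr)\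 \ \oplus\ \bigoplus_{\{\boldsymbol k,-\boldsymbol k\}}\begin{bmatrix} D_{1}(\boldsymbol k) & D_{2}(\boldsymbol k)\\[2pt] D_{2}(-\boldsymbol k) & D_{1}(-\boldsymbol k)\end{bmatrix}, \] where \[ D_{1}(\boldsymbol k):=\widehat S_{0}(\boldsymbol k)+\widehat S_{1}(\boldsymbol k)\,\mathbf{i},\qquad D_{2}(\boldsymbol k):=\bigl(\widehat S_{2}(\boldsymbol k)+\widehat S_{3}(\boldsymbol k)\,\mathbf{i}\bigr)\,\mathbf{j}. \]
   Context: Quaternions $\mathbb{H}$ with units $\mathbf{i},\mathbf{j}$, $\mathbf{k}=\mathbf{i}\mathbf{j}$, $\mathbf{i}^2=\mathbf{j}^2=-1$; $\mathbb{C}_{\mathbf{i}}=\mathrm{span}_{\mathbb{R}}\{1,\mathbf{i}\}$. Let $\boldsymbol n=(n_1,\dots,n_d)\in\mathbb{N}^d$, $\Lambda_{\boldsymbol n}=\prod_{\ell=1}^d\{0,\dots,n_\ell-1\}$ with lexicographic order, $N_{\boldsymbol n}=\prod_\ell n_\ell$. Multilevel periodic shifts $P_{\boldsymbol n}^{(\boldsymbol\rho)}:=P_{n_1}^{(\rho_1)}\otimes\cdots\otimes P_{n_d}^{(\rho_d)}$ with $[P_{n}^{(\rho)}]_{ij}=1$ if $i\equiv j+\rho \pmod n$, else $0$. Given a finite $\mathcal F\subset\mathbb{Z}^d$ and coefficients $p_{\mathrm R}(\boldsymbol\rho)\in\mathbb{H}^{s\times t}$ of the right trigonometric polynomial $p_{\mathrm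 R}(\boldsymbol\theta)=\sum_{\boldsymbol\rho\in\mathcal F}p_{\mathrm R}(\boldsymbol\rho)e^{-\mathbf{i}\langle\boldsymbol\rho,\boldsymbol\theta\rangle}$, the $d$-level $s\times t$ block circulant is $C_{\boldsymbol n}(p_{\mathrm R}):=\sum_{\boldsymbol\rho\in\mathcal F}P_{\boldsymbol n}^{(\boldsymbol\rho)}\otimes p_{\mathrm R}(\boldsymbol\rho)\in\mathbb{H}^{N_{\boldsymbol n}s\times N_{\boldsymbol n}t}$. Write each coefficient in Cartesian form $p_{\mathrm R}(\boldsymbol\rho)=p_{\mathrm R}(\boldsymbol\rho)^{(0)}+p_{\mathrm R}(\boldsymbol\rho)^{(1)}\mathbf{i}+p_{\mathrm R}(\boldsymbol\rho)^{(2)}\mathbf{j}+p_{\mathrm R}(\boldsymbol\rho)^{(3)}(\mathbf{i}\mathbf{j})$ with $p_{\mathrm R}(\boldsymbol\rho)^{(\ell)}\in\mathbb{R}^{s\times t}$. The QDFT is $[F_{\mathbf{i},n}]_{uv}=n^{-1/2}\exp(-2\pi\mathbf{i}uv/n)$, $u,v=0,\dots,n-1$, and $F_{\mathbf{i}}^{(\boldsymbol n)}:=F_{\mathbf{i},n_1}\otimes\cdots\otimes F_{\mathbf{i},n_d}$. $A_n\in\{0,1\}^{n\times n}$ is the permutation mapping $e_s\mapsto e_{(-s)\bmod n}$ and $A_{\boldsymbol n}:=A_{n_1}\otimes\cdots\otimes A_{n_d}$. For $\boldsymbol k\in\Lambda_{\boldsymbol n}$, $-\boldsymbol k:=((-k_1)\bmod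 n_1,\dots,(-k_d)\bmod n_d)$; $\mathrm{Fix}:=\{\boldsymbol k\in\Lambda_{\boldsymbol n}: 2k_\ell\equiv0 \pmod{n_\ell}\ \forall\ell\}$; $\mathcal K:=\{\boldsymbol k\in\Lambda_{\boldsymbol n}\setminus\mathrm{Fix}:\boldsymbol k\prec-\boldsymbol k\}$ (lexicographic order). $P$ is the permutation matrix mapping the canonical basis according to the ordered list: first the elements of $\mathrm{Fix}$ (lexicographically), then the pairs $\boldsymbol k_1,-\boldsymbol k_1,\boldsymbol k_2,-\boldsymbol k_2,\dots$ for $\boldsymbol k_j\in\mathcal K$ in lexicographic order. The second direct sum runs over unordered pairs $\{\boldsymbol k,-\boldsymbol k\}$ with $\boldsymbol k\in\mathcal K$. *)

From HB Require Import structures.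
From mathcomp Require Import all_boot all_order all_algebra.
From mathcomp Require Import mxtens.
From mathcomp Require Import ring.
From mathcomp Require Import reals trigo.

Set Implicit Arguments.
Unset Strict Implicit.
Unset Printing Implicit Defensive.

Import Order.TTheory GRing.Theory Num.Theory.
Local Open Scope ring_scope.

(* Real quaternions H over a real field R: x = x0 + x1 i + x2 j + x3 (ij),  *)
(* with i^2 = j^2 = -1 and k := ij (Hamilton's convention).                 *)

Section Quaternions.
Variable R : realType.

Record quat := Quat { q0 : R; q1 : R; q2 : R; q3 : R }.

Definition quat2tup (x : quat) := (q0 x, q1 x, q2 x, q3 x).
Definition tup2quat (x : R * R * R * R) :=
  let: (a, b, c, e) := x in Quat a b c e.
Lemma quat2tupK : cancel quat2tup tup2quat. Proof. by case. Qed.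

HB.instance Definition _ := Equality.copy quat (can_type quat2tupK).
HB.instance Definition _ := Choice.copy quat (can_type quat2tupK).

Definition qzero := Quat 0 0 0 0.
Definition qadd x y := Quat (q0 x + q0 y) (q1 x + q1 y) (q2 x + q2 y) (q3 x + q3 y).
Definition qopp x := Quat (- q0 x) (- q1 x) (- q2 x) (- q3 x).

Lemma qaddA : associative qadd.
Proof. by move=> [? ? ? ?] [? ? ? ?] [? ? ? ?]; rewrite /qadd /=; congr Quat; ring. Qed.
Lemma qaddC : commutative qadd.
Proof. by move=> [? ? ? ?] [? ? ? ?]; rewrite /qadd /=; congr Quat; ring. Qed.
Lemma qadd0 : left_id qzero qadd.
Proof. by move=> [? ? ? ?]; rewrite /qadd /=; congr Quat; ring. Qed.
Lemma qaddN : left_inverse qzero qopp qadd.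
Proof. by move=> [? ? ? ?]; rewrite /qadd /=; congr Quat; ring. Qed.

HB.instance Definition _ := GRing.isZmodule.Build quat qaddA qaddC qadd0 qaddN.

Definition qone := Quat 1 0 0 0.
Definition qmul x y :=
  Quat (q0 x * q0 y - q1 x * q1 y - q2 x * q2 y - q3 x * q3 y)
       (q0 x * q1 y + q1 x * q0 y + q2 x * q3 y - q3 x * q2 y)
       (q0 x * q2 y - q1 x * q3 y + q2 x * q0 y + q3 x * q1 y)
       (q0 x * q3 y + q1 x * q2 y - q2 x * q1 y + q3 x * q0 y).

Lemma qmulA : associative qmul.
Proof. by move=> [? ? ? ?] [? ? ? ?] [? ? ? ?]; rewrite /qmul /qadd /=; congr Quat; ring. Qed.
Lemma qmul1 : left_id qone qmul.
Proof. by move=> [? ? ? ?]; rewrite /qmul /qadd /=; congr Quat; ring. Qed.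
Lemma qmulr1 : right_id qone qmul.
Proof. by move=> [? ? ? ?]; rewrite /qmul /qadd /=; congr Quat; ring. Qed.
Lemma qmulDl : left_distributive qmul qadd.
Proof. by move=> [? ? ? ?] [? ? ? ?] [? ? ? ?]; rewrite /qmul /qadd /=; congr Quat; ring. Qed.
Lemma qmulDr : right_distributive qmul qadd.
Proof. by move=> [? ? ? ?] [? ? ? ?] [? ? ? ?]; rewrite /qmul /qadd /=; congr Quat; ring. Qed.
Lemma qone_neq0 : qone != 0.
Proof. by apply/eqP => -[] /eqP; rewrite oner_eq0. Qed.

HB.instance Definition _ :=
  GRing.Zmodule_isNzRing.Build quat qmulA qmul1 qmulr1 qmulDl qmulDr qone_neq0.

Definition qi : quat := Quat 0 1 0 0.
Definition qj : quat := Quat 0 0 1 0.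
Definition qk : quat := Quat 0 0 0 1.
Definition qreal (r : R) : quat := Quat r 0 0 0.
Definition qconj (x : quat) : quat := Quat (q0 x) (- q1 x) (- q2 x) (- q3 x).
Definition qcomp (l : nat) (x : quat) : R :=
  match l with 0 => q0 x | 1 => q1 x | 2 => q2 x | _ => q3 x end.
Definition qexpi (theta : R) : quat := Quat (cos theta) (sin theta) 0 0.

End Quaternions.

Arguments qi {R}. Arguments qj {R}. Arguments qk {R}.

Definition qadj (R : realType) m n (A : 'M[quat R]_(m, n)) : 'M[quat R]_(n, m) :=
  map_mx (@qconj R) A^T.

(* Multi-indices.  Lambda_n = prod_l {0..n_l - 1} (l = 0..d-1) is encoded    *)
(* by the mixed-radix (first coordinate most significant) linear index       *)
(*   k = sum_l k_l * prod_{l' > l} n_l'   in {0, .., N_n - 1},               *)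
(* which is exactly the ordering of Kronecker products, and for which the    *)
(* natural order on linear indices is the lexicographic order on Lambda_n.   *)

Section MultiIndex.
Variables (d : nat) (n : 'I_d -> nat).
Local Open Scope nat_scope.

Definition Nn : nat := \prod_(l < d) n l.
Definition stride (l : 'I_d) : nat := \prod_(l' < d | (l < l')%N) n l'.
Definition mdig (k : nat) (l : 'I_d) : nat := (k %/ stride l) %% n l.
Definition menc (c : 'I_d -> nat) : nat := \sum_(l < d) c l * stride l.
Definition mneg (k : nat) : nat := menc (fun l => (n l - mdig k l) %% n l).
Definition isFix (k : nat) : bool := [forall l : 'I_d, (2 * mdig k l) %% n l == 0%N].
Definition lexlt (k k' : nat) : bool :=
  [exists l : 'I_d, [forall l' : 'I_d, (l' < l)%N ==> (mdig k l' == mdig k' l')]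
                    && (mdig k l < mdig k' l)%N].
Definition Fixl : seq nat := [seq k <- iota 0 Nn | isFix k].
Definition Kl : seq nat := [seq k <- iota 0 Nn | ~~ isFix k && lexlt k (mneg k)].
Definition Pord : seq nat := Fixl ++ flatten [seq [:: k; mneg k] | k <- Kl].
End MultiIndex.

Section Matrices.
Variables (R : realType) (d : nat) (n : 'I_d -> nat).
Local Notation H := (quat R).
Local Notation N := (Nn n).

Definition Pshift (rho : {ffun 'I_d -> int}) : 'M[H]_N :=
  \matrix_(i, j) ([forall l : 'I_d,
      ((mdig n i l)%:Z - (mdig n j l)%:Z - rho l == 0 %[mod (n l)%:Z])%Z])%:R.

Definition Cn s t (F : seq {ffun 'I_d -> int}) (p : {ffun 'I_d -> int} -> 'M[H]_(s, t))
  : 'M[H]_(N * s, N * t) :=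
  \sum_(rho <- F) (Pshift rho *t p rho).

Definition qdft (m u v : nat) : H :=
  qreal (Num.sqrt (m%:R : R))^-1 * qexpi (- (2 * pi * (u * v)%:R / m%:R)).
Definition Fn : 'M[H]_N :=
  \matrix_(i, j) \prod_(l < d) qdft (n l) (mdig n i l) (mdig n j l).

Definition An : 'M[H]_N :=
  \matrix_(i, j) ([forall l : 'I_d, ((mdig n i l + mdig n j l) %% n l)%N == 0%N])%:R.

Definition Shat s t (F : seq {ffun 'I_d -> int}) (p : {ffun 'I_d -> int} -> 'M[H]_(s, t))
  (l : nat) (k : nat) : 'M[H]_(s, t) :=
  \matrix_(a, b) \sum_(rho <- F)
     qreal (qcomp l (p rho a b)) *
     qexpi (- (2 * pi * \sum_(l' < d) ((mdig n k l')%:Z * rho l')%:~R / (n l')%:R)).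

Definition blockdiag s t (B : nat -> 'M[H]_(s, t)) : 'M[H]_(N * s, N * t) :=
  \sum_(k < N) (delta_mx k k *t B k).

Definition Pperm : 'M[H]_N := \matrix_(i, j) (j == nth 0%N (Pord n) i :> nat)%:R.

(* Block direct sum of a list of blocks: each block is given by its number c *)
(* of block-rows (= block-columns) and its s x t sub-blocks B e e' (e, e' < c). *)
Fixpoint bdsum_entry s t (gs : seq (nat * (nat -> nat -> 'M[H]_(s, t))))
   (m : nat) (a : 'I_s) (m' : nat) (b : 'I_t) : H :=
  match gs with
  | [::] => 0
  | (c, B) :: gs' =>
      if (m < c)%N then (if (m' < c)%N then B m m' a b else 0)
      else if (m' < c)%N then 0 else bdsum_entry gs' (m - c) a (m' - c) b
  end.
Definition bdsum s t (gs : seq (nat * (nat -> nat -> 'M[H]_(s, t)))) M M'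
  : 'M[H]_(M * s, M' * t) :=
  \matrix_(i, j) bdsum_entry gs (mxtens_unindex i).1 (mxtens_unindex i).2
                                (mxtens_unindex j).1 (mxtens_unindex j).2.

End Matrices.

(* Split every quaternion as z + w j with z, w in C_i.  Since j z = conj(z) j, the j-part of
   an entry of U_L C U_R^* sees the right DFT transposed rather than adjoint: the C_i-part is
   a sum of entries of F P F^* and the j-part of F P F^T (P a multilevel shift).  Both factor
   over the levels into one-level character sums, with e(x) := exp(2 pi i x),
     sum_x sum_y F_(k,x) [x = y + rho mod n] n^(-1/2) e(c y / n) = [n | c - k] e(-k rho / n),
   which follow from the vanishing of full sums of nontrivial roots of unity.  So F P F^* is
   diagonal and F P F^T is supported on k' = -k, which is the first formula.  Conjugating by P
   merely lists the indices so that each k in Fix stands alone and each k in K is followed by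
   -k; the only nonzero blocks then lie on the diagonal of the block direct sum. *)

From HB Require Import structures.
From mathcomp Require Import all_boot all_order all_algebra.
From mathcomp Require Import mxtens.
From mathcomp Require Import reals trigo complex.
From mathcomp Require Import ring lra zify.
Import Order.TTheory GRing.Theory Num.Theory.
Set Implicit Arguments.
Unset Strict Implicit.
Unset Printing Implicit Defensive.
Local Open Scope ring_scope.

Section MixedRadix.
Local Open Scope nat_scope.

Lemma Nn_recl d (n : 'I_d.+1 -> nat) :
  Nn n = n ord0 * Nn (fun l => n (lift ord0 l)).
Proof. by rewrite /Nn big_ord_recl. Qed.

Lemma stride_ord0 d (n : 'I_d.+1 -> nat) :
  stride n ord0 = Nn (fun l => n (lift ord0 l)).
Proof. by rewrite /stride big_mkcond big_ord_recl /= /Nn mul1n. Qed.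

Lemma stride_lift d (n : 'I_d.+1 -> nat) l :
  stride n (lift ord0 l) = stride (fun l => n (lift ord0 l)) l.
Proof.
rewrite /stride big_mkcond big_ord_recl /= [in RHS]big_mkcond mul1n.
by apply: eq_bigr => i _; rewrite /bump /= !add1n ltnS.
Qed.

Lemma mdig_lift d (n : 'I_d.+1 -> nat) k l :
  mdig n k (lift ord0 l) = mdig (fun l => n (lift ord0 l)) k l.
Proof. by rewrite /mdig stride_lift. Qed.

Lemma mdig_ord0 d (n : 'I_d.+1 -> nat) k :
  mdig n k ord0 = (k %/ Nn (fun l => n (lift ord0 l))) %% n ord0.
Proof. by rewrite /mdig stride_ord0. Qed.

Lemma menc_recl d (n : 'I_d.+1 -> nat) c :
  menc n c = c ord0 * Nn (fun l => n (lift ord0 l)) +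
             menc (fun l => n (lift ord0 l)) (fun l => c (lift ord0 l)).
Proof.
rewrite /menc big_ord_recl stride_ord0; congr (_ + _).
by apply: eq_bigr => i _; rewrite stride_lift.
Qed.

Lemma mdig_ltn d (n : 'I_d -> nat) k l : 0 < n l -> mdig n k l < n l.
Proof. exact: ltn_pmod. Qed.

Lemma menc_ltn d (n : 'I_d -> nat) c : (forall l, c l < n l) -> menc n c < Nn n.
Proof.
elim: d n c => [|d IH] n c c_lt; first by rewrite /menc /Nn !big_ord0.
rewrite menc_recl Nn_recl.
have := IH _ _ (fun l => c_lt (lift ord0 l)); set N' := Nn _ => e_lt.
apply: (@leq_trans (c ord0 * N' + N')); first by rewrite ltn_add2l.
by rewrite -mulSnr leq_mul2r c_lt orbT.
Qed.

Lemma mdigDmul d (n : 'I_d -> nat) k q l : mdig n (k + q * Nn n) l = mdig n k l.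
Proof.
elim: d n k q l => [|d IH] n k q l; first by case: l.
case: (unliftP ord0 l) => [l'|] ->; first by rewrite !mdig_lift Nn_recl mulnA IH.
rewrite !mdig_ord0 Nn_recl mulnA.
case: (posnP (Nn (fun l => n (lift ord0 l)))) => [->|N_gt0]; first by rewrite !divn0.
by rewrite divnDr ?dvdn_mull // mulnK // addnC modnMDl.
Qed.

Lemma mdig_menc d (n : 'I_d -> nat) c : (forall l, c l < n l) ->
  forall l, mdig n (menc n c) l = c l.
Proof.
elim: d n c => [|d IH] n c c_lt l; first by case: l.
have := menc_ltn (fun l => c_lt (lift ord0 l)).
rewrite menc_recl; set N' := Nn _; set e := menc _ _ => e_lt.
case: (unliftP ord0 l) => [l'|] ->; first by rewrite mdig_lift addnC mdigDmul IH.
rewrite mdig_ord0 -/N' divnMDl; last by case: N' e_lt.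
by rewrite divn_small // addn0 modn_small.
Qed.

Lemma menc_mdig d (n : 'I_d -> nat) k : k < Nn n -> menc n (mdig n k) = k.
Proof.
elim: d n k => [|d IH] n k; first by rewrite /Nn /menc !big_ord0; case: k.
rewrite Nn_recl menc_recl mdig_ord0; set N' := Nn _ => k_lt.
have N'_gt0 : 0 < N' by case: N' k_lt => //; rewrite muln0.
have -> : menc (fun l => n (lift ord0 l)) (fun l => mdig n k (lift ord0 l)) = k %% N'.
  rewrite -[in RHS](IH (fun l => n (lift ord0 l)) (k %% N')) ?ltn_pmod //.
  apply: eq_bigr => i _.
  by rewrite mdig_lift {1}(divn_eq k N') addnC mdigDmul.
by rewrite modn_small -?divn_eq // ltn_divLR.
Qed.

Lemma mdig_inj d (n : 'I_d -> nat) k k' : k < Nn n -> k' < Nn n ->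
  (forall l, mdig n k l = mdig n k' l) -> k = k'.
Proof.
move=> k_lt k'_lt eq_dig; rewrite -(menc_mdig k_lt) -(menc_mdig k'_lt).
by apply: eq_bigr => i _; rewrite eq_dig.
Qed.

End MixedRadix.

Lemma big_mxtens_index (T : nmodType) m q (f : 'I_(m * q) -> T) :
  \sum_i f i = \sum_(x < m) \sum_(y < q) f (mxtens_index (x, y)).
Proof.
rewrite pair_big /= (reindex (@mxtens_index m q)) /=; last first.
  by exists (@mxtens_unindex m q) => i _; rewrite (mxtens_indexK, mxtens_unindexK).
by apply: eq_bigr => -[].
Qed.

Lemma sum_prod_mdig (R : comPzSemiRingType) d (n : 'I_d -> nat) (f : 'I_d -> nat -> R) :
  \sum_(v < Nn n) \prod_(l < d) f l (mdig n v l) = \prod_(l < d) \sum_(w < n l) f l w.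
Proof.
elim: d n f => [|d IH] n f; first by rewrite /Nn !big_ord0 big_ord1 big_ord0.
rewrite big_ord_recl -(IH _ (fun l => f (lift ord0 l))) big_distrl.
rewrite [in LHS]Nn_recl big_mxtens_index.
apply: eq_bigr => x _; rewrite big_distrr; apply: eq_bigr => y _ /=.
rewrite big_ord_recl mdig_ord0 divnMDl; last by case: (Nn _) y => -[].
rewrite divn_small // addn0 modn_small //; congr (_ * _).
by apply: eq_bigr => i _; rewrite mdig_lift addnC mdigDmul.
Qed.

Section ModularNegation.
Local Open Scope nat_scope.

Definition oppmod (m x : nat) : nat := (m - x) %% m.

Lemma oppmodE m x : x < m -> oppmod m x = if x == 0 then 0 else m - x.
Proof.
move=> x_lt; case: eqP => [->|x_neq0]; first by rewrite /oppmod subn0 modnn.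
by rewrite /oppmod modn_small; lia.
Qed.

Lemma oppmod_ltn m x : 0 < m -> oppmod m x < m.
Proof. exact: ltn_pmod. Qed.

Lemma oppmodK m x : x < m -> oppmod m (oppmod m x) = x.
Proof.
move=> x_lt; have [->|x_neq0] := eqVneq x 0; first by rewrite /oppmod subn0 modnn subn0 modnn.
rewrite [oppmod m x]oppmodE // (negbTE x_neq0) oppmodE; last lia.
by case: eqP => ?; lia.
Qed.

Lemma modn_lt_double m y : y < 2 * m -> y %% m = if y < m then y else y - m.
Proof.
move=> y_lt; case: ltnP => y_ge; first exact: modn_small.
by rewrite -{1}(subnK y_ge) modnDr modn_small //; lia.
Qed.

Lemma dvdn_add_oppmod m x y : x < m -> y < m -> (m %| x + y) = (y == oppmod m x).
Proof.
move=> x_lt y_lt; rewrite oppmodE //; have [->|x_neq0] := eqVneq x 0.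
  by rewrite add0n /dvdn modn_small.
by rewrite /dvdn modn_lt_double; [case: ifP => ?; apply/eqP/eqP | ]; lia.
Qed.

Lemma oppmod_fixE m x : x < m -> (oppmod m x == x) = (2 * x %% m == 0).
Proof.
move=> x_lt; rewrite oppmodE //; have [->|x_neq0] := eqVneq x 0; first by rewrite mod0n.
by rewrite modn_lt_double; [case: ifP => ?; apply/eqP/eqP | ]; lia.
Qed.

Lemma double_oppmod m x : x < m -> (2 * oppmod m x %% m == 0) = (2 * x %% m == 0).
Proof.
move=> x_lt; rewrite oppmodE //; have [->|x_neq0] := eqVneq x 0; first by [].
by rewrite !modn_lt_double; [case: ifP => ?; case: ifP => ?; apply/eqP/eqP | ..]; lia.
Qed.

End ModularNegation.

Lemma perm_flatten_pairs (T : eqType) (f : T -> T) (s : seq T) :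
  perm_eq (flatten [seq [:: x; f x] | x <- s]) (s ++ map f s).
Proof.
elim: s => //= x s IH; rewrite perm_cons.
by rewrite perm_sym (perm_catCA s [:: f x]) /= perm_cons perm_sym.
Qed.

Section Negation.
Local Open Scope nat_scope.
Variables (d : nat) (n : 'I_d -> nat).
Hypothesis n_gt0 : forall l, 0 < n l.
Local Notation N := (Nn n).

Lemma mneg_ltn k : mneg n k < N.
Proof. by apply: menc_ltn => l; apply: oppmod_ltn. Qed.

Lemma mdig_mneg k l : mdig n (mneg n k) l = oppmod (n l) (mdig n k l).
Proof. by apply: mdig_menc => l'; apply: oppmod_ltn. Qed.

Lemma mnegK k : k < N -> mneg n (mneg n k) = k.
Proof.
move=> k_lt; apply: (@mdig_inj _ n) => //; first exact: mneg_ltn.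
by move=> l; rewrite !mdig_mneg oppmodK ?mdig_ltn.
Qed.

Lemma isFix_mneg k : isFix n (mneg n k) = isFix n k.
Proof.
by apply: eq_forallb => l; rewrite mdig_mneg double_oppmod ?mdig_ltn.
Qed.

Lemma mneg_fixE k : k < N -> (mneg n k == k) = isFix n k.
Proof.
move=> k_lt; apply/eqP/forallP => [mneg_k l|fix_k].
  by rewrite -oppmod_fixE ?mdig_ltn // -mdig_mneg mneg_k.
apply: (@mdig_inj _ n) => // [|l]; first exact: mneg_ltn.
by rewrite mdig_mneg; apply/eqP; rewrite oppmod_fixE ?mdig_ltn.
Qed.

Lemma eq_mneg_dvdn k k' : k < N -> k' < N ->
  [forall l, n l %| mdig n k l + mdig n k' l] = (k' == mneg n k).
Proof.
move=> k_lt k'_lt; apply/forallP/eqP => [dvd_kk'|->] => [|l].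
  apply: (@mdig_inj _ n) => // [|l]; first exact: mneg_ltn.
  by rewrite mdig_mneg; apply/eqP; rewrite -dvdn_add_oppmod ?mdig_ltn.
by rewrite mdig_mneg dvdn_add_oppmod ?mdig_ltn ?oppmod_ltn.
Qed.

Lemma lexlt_asym k k' : lexlt n k k' -> ~~ lexlt n k' k.
Proof.
case/existsP=> l1 /andP[/forallP eq1 lt1]; apply/negP => /existsP[l2 /andP[/forallP eq2 lt2]].
case: (ltngtP l1 l2) => [l12|l21|/val_inj e12].
- by move: (eq2 l1) lt1; rewrite l12 => /eqP ->; rewrite ltnn.
- by move: (eq1 l2) lt2; rewrite l21 => /eqP ->; rewrite ltnn.
- by subst l2; move: (ltn_trans lt1 lt2); rewrite ltnn.
Qed.

Lemma lexlt_total k k' : k < N -> k' < N -> k != k' -> lexlt n k k' || lexlt n k' k.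
Proof.
move=> k_lt k'_lt k_neq; have [l0 neq_l0] : exists l, mdig n k l != mdig n k' l.
  apply/existsP; apply: contraR k_neq => /existsPn eq_dig; apply/eqP.
  by apply: (@mdig_inj _ n) => // l; apply/eqP; rewrite -[_ == _]negbK eq_dig.
case: (@arg_minnP _ l0 (fun l => mdig n k l != mdig n k' l) val neq_l0) => l neq_l min_l.
have eq_below (l' : 'I_d) : l' < l -> mdig n k l' = mdig n k' l'.
  by move=> lt_l'; apply/eqP; apply: contraTT lt_l' => /min_l; rewrite -leqNgt.
case: (ltngtP (mdig n k l) (mdig n k' l)) => [lt_kk'|lt_k'k|eq_kk'].
- apply/orP; left; apply/existsP; exists l; rewrite lt_kk' andbT.
  by apply/forallP => l'; apply/implyP => /eq_below ->.
- apply/orP; right; apply/existsP; exists l; rewrite lt_k'k andbT.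
  by apply/forallP => l'; apply/implyP => /eq_below ->.
- by rewrite eq_kk' eqxx in neq_l.
Qed.

Lemma mem_Fixl k : (k \in Fixl n) = (k < N) && isFix n k.
Proof. by rewrite mem_filter mem_iota add0n andbC. Qed.

Lemma mem_Kl k : (k \in Kl n) = [&& k < N, ~~ isFix n k & lexlt n k (mneg n k)].
Proof. by rewrite mem_filter mem_iota add0n andbC /= andbA. Qed.

Lemma Pord_uniq : uniq (Pord n).
Proof.
rewrite /Pord cat_uniq (perm_uniq (perm_flatten_pairs _ _)) cat_uniq.
rewrite !filter_uniq ?iota_uniq //=; apply/and3P; split.
- apply/hasPn => x; rewrite (perm_mem (perm_flatten_pairs _ _)) mem_cat mem_Fixl.
  case/orP => [|/mapP[y]]; rewrite mem_Kl => /and3P[_ not_fix _].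
    by rewrite (negbTE not_fix) andbF.
  by move=> ->; rewrite isFix_mneg (negbTE not_fix) andbF.
- apply/hasPn => _ /mapP[y y_K ->]; move: y_K; rewrite !mem_Kl => /and3P[y_lt _ /lexlt_asym].
  by rewrite mnegK // => /negbTE ->; rewrite !andbF.
- rewrite map_inj_in_uniq ?filter_uniq ?iota_uniq // => x y.
  rewrite !mem_Kl => /andP[x_lt _] /andP[y_lt _] eq_neg.
  by rewrite -(mnegK x_lt) eq_neg mnegK.
Qed.

Lemma mem_Pord k : (k \in Pord n) = (k < N).
Proof.
rewrite /Pord mem_cat (perm_mem (perm_flatten_pairs _ _)) mem_cat mem_Fixl mem_Kl.
apply/idP/idP => [|k_lt].
  by case/or3P => [/andP[]|/and3P[]|/mapP[y _ ->]] //; apply: mneg_ltn.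
rewrite k_lt /=; case fix_k: (isFix n k) => //=.
case lt_k: (lexlt n k (mneg n k)) => //=; apply/mapP; exists (mneg n k); last by rewrite mnegK.
rewrite mem_Kl mneg_ltn isFix_mneg fix_k mnegK //=.
have k_neq : k != mneg n k by rewrite eq_sym mneg_fixE // fix_k.
by move: (lexlt_total k_lt (mneg_ltn k) k_neq); rewrite lt_k.
Qed.

Lemma size_Pord : size (Pord n) = N.
Proof.
have: perm_eq (Pord n) (iota 0 N).
  by apply: uniq_perm; rewrite ?Pord_uniq ?iota_uniq // => x; rewrite mem_Pord mem_iota.
by move/perm_size ->; rewrite size_iota.
Qed.

End Negation.

Section BlockDirectSum.
Variables (R : realType) (s t : nat) (K : eqType).
Local Notation M := 'M[quat R]_(s, t).
Variables (grp : K -> seq nat) (blk : K -> nat * (nat -> nat -> M)) (X : nat -> nat -> M).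

Lemma bdsum_entry_map (ks : seq K) :
  let idx := flatten (map grp ks) in
  uniq idx ->
  {in ks, forall k, (blk k).1 = size (grp k) /\
     forall e e', (e < size (grp k))%N -> (e' < size (grp k))%N ->
       (blk k).2 e e' = X (nth 0%N (grp k) e) (nth 0%N (grp k) e')} ->
  (forall x y, x \in idx -> y \in idx -> X x y != 0 ->
     has (fun k => (x \in grp k) && (y \in grp k)) ks) ->
  forall m m' a b, (m < size idx)%N -> (m' < size idx)%N ->
  bdsum_entry (map blk ks) m a m' b = X (nth 0%N idx m) (nth 0%N idx m') a b.
Proof.
elim: ks => [|k ks IH] //= idx_uniq blk_ks X_supp m m' a b.
move: idx_uniq; rewrite cat_uniq => /and3P[_ disj idx_uniq].
set rest := flatten (map grp ks) in disj idx_uniq IH *.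
have in_rest z k' : k' \in ks -> z \in grp k' -> z \in rest.
  by move=> k'_ks z_k'; apply/flatten_mapP; exists k'.
have X_sep x y : x \in grp k -> y \in rest -> X x y = 0 /\ X y x = 0.
  move=> x_k y_rest; have x_idx : x \in grp k ++ rest by rewrite mem_cat x_k.
  have y_idx : y \in grp k ++ rest by rewrite mem_cat y_rest orbT.
  split; apply/eqP; apply: contraNT disj => X_neq0; apply/hasP.
    case/orP: (X_supp _ _ x_idx y_idx X_neq0) => [/andP[_ y_k]|/hasP[k' k'_ks /andP[x_k' _]]].
      by exists y.
    by exists x => //; apply: in_rest x_k'.
  case/orP: (X_supp _ _ y_idx x_idx X_neq0) => [/andP[y_k _]|/hasP[k' k'_ks /andP[_ x_k']]].
    by exists y.
  by exists x => //; apply: in_rest x_k'.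
have [size_k blk_kE] := blk_ks k (mem_head k ks).
move: size_k blk_kE; case: (blk k) => c B /= -> blk_kE.
rewrite size_cat !nth_cat => m_lt m'_lt.
have shift_lt z : (size (grp k) <= z)%N -> (z < size (grp k) + size rest)%N ->
    (z - size (grp k) < size rest)%N by move=> ? ?; rewrite ltn_subLR.
case: (ltnP m (size (grp k))) => m_k; case: (ltnP m' (size (grp k))) => m'_k.
- by rewrite blk_kE.
- have [-> _] := X_sep _ _ (mem_nth 0%N m_k) (mem_nth 0%N (shift_lt _ m'_k m'_lt)).
  by rewrite mxE.
- have [_ ->] := X_sep _ _ (mem_nth 0%N m'_k) (mem_nth 0%N (shift_lt _ m_k m_lt)).
  by rewrite mxE.
apply: IH; rewrite ?shift_lt //; first by move=> k' k'_ks; apply: blk_ks; rewrite inE k'_ks orbT.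
move=> x y x_rest y_rest X_neq0.
have := X_supp x y; rewrite !mem_cat x_rest y_rest !orbT => /(_ isT isT X_neq0) /orP[|//].
by case/andP=> x_k; case/negP: disj; apply/hasP; exists x.
Qed.

End BlockDirectSum.

Local Open Scope complex_scope.

Section ComplexQuaternions.
Variable R : realType.
Local Notation H := (quat R).

Lemma qaddE (x y : H) : x + y = qadd x y. Proof. by []. Qed.
Lemma qmulE (x y : H) : x * y = qmul x y. Proof. by []. Qed.

Definition qcplx (z : R[i]) : H := let: a +i* b := z in Quat a b 0 0.

Lemma qcplx_is_zmod_morphism : zmod_morphism qcplx.
Proof. by case=> a b [c e]; rewrite qaddE /qcplx /qadd /= oppr0 addr0. Qed.

Lemma qcplx_is_monoid_morphism : monoid_morphism qcplx.
Proof.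
split=> // -[a b] [c e].
have -> : (a +i* b) * (c +i* e) = (a * c - b * e) +i* (a * e + b * c) by [].
by rewrite qmulE /qmul /=; congr Quat; ring.
Qed.

HB.instance Definition _ := GRing.isZmodMorphism.Build R[i] H qcplx
  qcplx_is_zmod_morphism.
HB.instance Definition _ := GRing.isMonoidMorphism.Build R[i] H qcplx
  qcplx_is_monoid_morphism.

Lemma qconj_cplx z : qconj (qcplx z) = qcplx (conjc z).
Proof. by case: z => a b; rewrite /qconj /= oppr0. Qed.

Lemma qj_cplx z : qj * qcplx z = qcplx (conjc z) * qj.
Proof. by case: z => a b; rewrite !qmulE /qmul /=; congr Quat; ring. Qed.

Definition qsimplex (x : H) : R[i] := q0 x +i* q1 x.
Definition qperplex (x : H) : R[i] := q2 x +i* q3 x.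

Lemma quat_cplxE (x : H) : x = qcplx (qsimplex x) + qcplx (qperplex x) * qj.
Proof. by case: x => a b c e; rewrite qaddE qmulE /qadd /qmul /=; congr Quat; ring. Qed.

Lemma qcplx_i : qcplx 'i = qi. Proof. by []. Qed.

Lemma qcplx_real r : qcplx r%:C = qreal r. Proof. by []. Qed.

Lemma qk_ij : qk = qi * qj :> H.
Proof. by rewrite !qmulE /qmul /=; congr Quat; ring. Qed.

Lemma qconjM (x y : H) : qconj (x * y) = qconj y * qconj x.
Proof.
by case: x => a b c e; case: y => a' b' c' e'; rewrite !qmulE /qmul /qconj /=; congr Quat; ring.
Qed.

Lemma qconj_nat m : qconj (m%:R : H) = m%:R.
Proof. by rewrite -(rmorph_nat qcplx) qconj_cplx conjc_nat. Qed.

End ComplexQuaternions.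

Arguments qcplx {R} : simpl never.

Section UnitCircle.
Variable R : realType.
Local Notation C := R[i].

(* Stated for [conjc] itself: [rmorphM] alone leaves the bundled morphism, which the
   [conjc] lemmas of [complex] do not match. *)
Lemma conjcM (z w : C) : conjc (z * w) = conjc z * conjc w.
Proof. exact: rmorphM. Qed.

Lemma conjc_prod (I : Type) (r : seq I) (F : I -> C) :
  conjc (\prod_(i <- r) F i) = \prod_(i <- r) conjc (F i).
Proof. exact: rmorph_prod. Qed.

Definition expi (theta : R) : C := cos theta +i* sin theta.
Definition e2pi (x : R) : C := expi (2 * pi * x).

Lemma qexpi_cplx theta : qexpi theta = qcplx (expi theta).
Proof. by []. Qed.

Lemma expiD a b : expi (a + b) = expi a * expi b.
Proof.
rewrite /expi cosD sinD; apply/eqP; rewrite eq_complex /=.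
by apply/andP; split; apply/eqP; ring.
Qed.

Lemma expi0 : expi 0 = 1.
Proof. by rewrite /expi cos0 sin0. Qed.

Lemma conj_expi theta : conjc (expi theta) = expi (- theta).
Proof. by rewrite /expi cosN sinN. Qed.

Lemma e2piD a b : e2pi (a + b) = e2pi a * e2pi b.
Proof. by rewrite /e2pi mulrDr expiD. Qed.

Lemma e2pi0 : e2pi 0 = 1.
Proof. by rewrite /e2pi mulr0 expi0. Qed.

Lemma e2pi_int (m : int) : e2pi m%:~R = 1.
Proof.
have e2pi_nat k : e2pi k%:R = 1.
  elim: k => [|k IH]; first exact: e2pi0.
  by rewrite -addn1 natrD e2piD IH mul1r /e2pi /expi mulr1 mulr_natl cos2pi sin2pi.
case: m => k; first exact: e2pi_nat.
by rewrite NegzE intrN -[LHS]mulr1 -(e2pi_nat k.+1) -e2piD addNr e2pi0.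
Qed.

Lemma e2piDint x (m : int) : e2pi (x + m%:~R) = e2pi x.
Proof. by rewrite e2piD e2pi_int mulr1. Qed.

Lemma e2piX x m : e2pi x ^+ m = e2pi (x * m%:R).
Proof.
elim: m => [|m IH]; first by rewrite expr0 mulr0 e2pi0.
by rewrite exprS IH -e2piD -addn1 natrD mulrDr mulr1 addrC.
Qed.

Lemma e2pi_neq1 (r m : nat) : (0 < r < m)%N -> e2pi (r%:R / m%:R) != 1.
Proof.
case/andP=> r_gt0 r_lt; apply/negP => /eqP [cos_eq1 _].
set y := pi * (r%:R / m%:R) : R.
have y_gt0 : 0 < y by rewrite mulr_gt0 ?pi_gt0 // divr_gt0 // ltr0n // (ltn_trans r_gt0).
have y_lt : y < pi.
  rewrite -[X in _ < X]mulr1 ltr_pM2l ?pi_gt0 // ltr_pdivrMr ?mul1r ?ltr_nat //.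
  by rewrite ltr0n (ltn_trans r_gt0).
have sin_gt0 : 0 < sin y by apply: sin_gt0_pi; rewrite y_gt0.
have : cos (y *+ 2) = 1 by rewrite -cos_eq1 /y mulr2n; congr cos; ring.
rewrite cos_mulr2n cos2sin2 => cos2y.
have : sin y ^+ 2 = 0 by lra.
by move/eqP; rewrite expf_eq0 /= gt_eqF.
Qed.

Lemma sum_e2pi (a : int) (m : nat) : (0 < m)%N ->
  \sum_(y < m) e2pi ((a * y%:Z)%:~R / m%:R) = if (m%:Z %| a)%Z then m%:R else 0.
Proof.
move=> m_gt0; have m_neq0 : (m%:R : R) != 0 by rewrite pnatr_eq0 -lt0n.
case: ifP => [/dvdzP[q ->]|a_ndvd].
  rewrite (eq_bigr (fun=> 1)) ?sumr_const ?card_ord // => y _.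
  by rewrite -[X in e2pi X](_ : (q * y%:Z)%:~R = _) ?e2pi_int //; field.
set z := e2pi (a%:~R / m%:R).
have zE (y : 'I_m) : e2pi ((a * y%:Z)%:~R / m%:R) = z ^+ y.
  by rewrite e2piX; congr e2pi; field.
rewrite (eq_bigr _ (fun y _ => zE y)).
have zm : z ^+ m = 1.
  by rewrite e2piX -[X in e2pi X](_ : a%:~R = _) ?e2pi_int //; field.
have z_neq1 : z != 1.
  have r_lt : (`|(a %% m%:Z)%Z| < m)%N.
    by rewrite -ltz_nat gez0_abs ?modz_ge0 ?ltz_pmod ?ltz_nat // eqz_nat -lt0n.
  rewrite /z {1}(divz_eq a m%:Z).
  rewrite -[X in e2pi X](_ : `|(a %% m%:Z)%Z|%:R / m%:R + (a %/ m%:Z)%Z%:~R = _).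
    rewrite e2piDint; apply: e2pi_neq1; rewrite r_lt andbT lt0n absz_eq0.
    by apply: contraFN a_ndvd => /eqP /dvdz_mod0P.
  by rewrite -[(`|_|)%:R]/((Posz `|_|)%:~R) gez0_abs ?modz_ge0 ?eqz_nat -?lt0n //; field.
apply/eqP; move: zm => /eqP; rewrite -subr_eq0 subrX1 mulf_eq0 subr_eq0 (negbTE z_neq1) /=.
by move/eqP ->.
Qed.

End UnitCircle.

Section OneLevelDFT.
Variable R : realType.
Local Notation C := R[i].

Definition isqrtn (m : nat) : C := (Num.sqrt (m%:R : R))^-1%:C.
Definition dftC (m u v : nat) : C := isqrtn m * expi (- (2 * pi * (u * v)%:R / m%:R)).
Definition dftchar (m : nat) (c : int) (y : nat) : C := isqrtn m * e2pi ((c * y%:Z)%:~R / m%:R).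
Definition shiftb (m x y : nat) (rho : int) : bool := (x%:Z - y%:Z - rho == 0 %[mod m%:Z])%Z.

Lemma conj_isqrtn m : conjc (isqrtn m) = isqrtn m.
Proof. by rewrite /isqrtn /= oppr0. Qed.

Lemma qdft_cplx m u v : qdft R m u v = qcplx (dftC m u v).
Proof. by rewrite rmorphM. Qed.

Lemma expiN2pi_sum (I : Type) (r : seq I) (f : I -> R) :
  expi (- (2 * pi * \sum_(i <- r) f i)) = \prod_(i <- r) e2pi (- f i).
Proof.
elim: r => [|x r IH]; first by rewrite !big_nil mulr0 oppr0 expi0.
by rewrite !big_cons -IH /e2pi -expiD; congr expi; ring.
Qed.

Lemma dftC_char m u v : dftC m u v = dftchar m (- u%:Z) v.
Proof. by rewrite /dftC /dftchar /e2pi; congr (_ * expi _); ring. Qed.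

Lemma conj_dftC m u v : conjc (dftC m u v) = dftchar m u%:Z v.
Proof. by rewrite /dftC /dftchar conjcM conj_isqrtn conj_expi /e2pi; congr (_ * expi _); ring. Qed.

Lemma isqrtn2 m : (0 < m)%N -> isqrtn m * isqrtn m * m%:R = 1.
Proof.
move=> m_gt0; rewrite /isqrtn -rmorphM -invfM -expr2 sqr_sqrtr ?ler0n //.
by rewrite -(rmorph_nat (real_complex R)) -rmorphM mulVf ?pnatr_eq0 -?lt0n.
Qed.

Lemma shiftbE m x y rho : (0 < m)%N -> (x < m)%N ->
  shiftb m x y rho = (x == absz ((y%:Z + rho) %% m%:Z)%Z).
Proof.
move=> m_gt0 x_lt; have m_neq0 : m%:Z != 0 by rewrite eqz_nat -lt0n.
rewrite /shiftb eqz_mod_dvd subr0 -eqz_nat gez0_abs ?modz_ge0 //.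
by rewrite -[in RHS](@modz_small x%:Z m%:Z) ?ltz_nat // eqz_mod_dvd opprD addrA.
Qed.

Lemma sum_dftC_shiftb m k y rho : (0 < m)%N ->
  \sum_(x < m) dftC m k x * (shiftb m x y rho)%:R =
  isqrtn m * e2pi (- ((k%:Z * (y%:Z + rho))%:~R / m%:R)).
Proof.
move=> m_gt0; have m_neq0 : m%:Z != 0 by rewrite eqz_nat -lt0n.
set r := ((y%:Z + rho) %% m%:Z)%Z; have r_ge0 : 0 <= r by rewrite modz_ge0.
have r_lt : (`|r| < m)%N by rewrite -ltz_nat gez0_abs // ltz_pmod // ltz_nat.
rewrite (bigD1 (Ordinal r_lt)) //= big1 => [|x x_neq]; last first.
  rewrite shiftbE // (_ : _ == _ = false) ?mulr0 //.
  by apply: contraNF x_neq => /eqP x_r; apply/eqP/val_inj.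
rewrite shiftbE // eqxx mulr1 addr0 dftC_char /dftchar; congr (_ * _).
set q := ((y%:Z + rho) %/ m%:Z)%Z; have yrhoE : y%:Z + rho = q * m%:Z + r by exact: divz_eq.
rewrite -[RHS](e2piDint _ (k%:Z * q)) yrhoE gez0_abs //; congr e2pi.
by field; rewrite pnatr_eq0 -lt0n.
Qed.

Lemma sum_dftC_shiftb_char m k rho (c : int) : (0 < m)%N ->
  \sum_(x < m) \sum_(y < m) dftC m k x * (shiftb m x y rho)%:R * dftchar m c y =
  (m%:Z %| c - k%:Z)%Z%:R * e2pi (- ((k%:Z * rho)%:~R / m%:R)).
Proof.
move=> m_gt0; have m_neq0 : (m%:R : R) != 0 by rewrite pnatr_eq0 -lt0n.
rewrite exchange_big /=.
under eq_bigr => y _ do rewrite -big_distrl /= (sum_dftC_shiftb _ _ _ m_gt0).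
have termE (y : 'I_m) :
    isqrtn m * e2pi (- ((k%:Z * (y%:Z + rho))%:~R / m%:R)) * dftchar m c y =
    isqrtn m * isqrtn m * e2pi (- ((k%:Z * rho)%:~R / m%:R)) *
    e2pi (((c - k%:Z) * y%:Z)%:~R / m%:R).
  rewrite /dftchar mulrACA -e2piD -[RHS]mulrA -e2piD.
  by congr (_ * e2pi _); field.
rewrite (eq_bigr _ (fun y _ => termE y)) -big_distrr /= sum_e2pi //.
case: ifP => _; last by rewrite mulr0 mul0r.
by rewrite mulrAC isqrtn2 // mul1r.
Qed.

End OneLevelDFT.

Arguments isqrtn {R}.
Arguments dftC {R}.
Arguments dftchar {R}.

Lemma natr_forall (T : comPzSemiRingType) (I : finType) (b : pred I) :
  [forall i, b i]%:R = \prod_i (b i)%:R :> T.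
Proof.
case: (boolP [forall i, b i]) => [/forallP b_all | /forallPn [i b_i]].
  by rewrite big1 // => i _; rewrite b_all.
by rewrite (bigD1 i) //= (negbTE b_i) mul0r.
Qed.

Lemma dvdz_subn_eq (m x y : nat) : (x < m)%N -> (y < m)%N -> (m%:Z %| y%:Z - x%:Z)%Z = (x == y).
Proof.
move=> x_lt y_lt; rewrite -eqz_mod_dvd !modz_small ?ltz_nat //.
by rewrite eqz_nat eq_sym.
Qed.

Section MultiLevelDFT.
Variables (R : realType) (d : nat) (n : 'I_d -> nat).
Hypothesis n_gt0 : forall l, (0 < n l)%N.
Local Notation N := (Nn n).
Local Notation C := R[i].

Definition dftCn (k u : nat) : C := \prod_(l < d) dftC (n l) (mdig n k l) (mdig n u l).
Definition shiftCn (rho : {ffun 'I_d -> int}) (u v : nat) : C :=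
  \prod_(l < d) (shiftb (n l) (mdig n u l) (mdig n v l) (rho l))%:R.
Definition charCn (c : 'I_d -> int) (v : nat) : C := \prod_(l < d) dftchar (n l) (c l) (mdig n v l).
Definition phase (k : nat) (rho : {ffun 'I_d -> int}) : C :=
  expi (- (2 * pi * \sum_(l < d) ((mdig n k l)%:Z * rho l)%:~R / (n l)%:R)).

Lemma Fn_cplx (k u : 'I_N) : Fn R n k u = qcplx (dftCn k u).
Proof. by rewrite mxE rmorph_prod; apply: eq_bigr => l _; rewrite qdft_cplx. Qed.

Lemma Pshift_cplx rho (u v : 'I_N) : Pshift R n rho u v = qcplx (shiftCn rho u v).
Proof. by rewrite mxE -(rmorph_nat qcplx) natr_forall. Qed.

Lemma sum_dftCn_shiftCn_char k rho c :
  \sum_(u < N) \sum_(v < N) dftCn k u * shiftCn rho u v * charCn c v =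
  [forall l, (n l %| c l - (mdig n k l)%:Z)%Z]%:R * phase k rho.
Proof.
pose f l x y : C :=
  dftC (n l) (mdig n k l) x * (shiftb (n l) x y (rho l))%:R * dftchar (n l) (c l) y.
have split_l (u v : 'I_N) : dftCn k u * shiftCn rho u v * charCn c v =
    \prod_(l < d) f l (mdig n u l) (mdig n v l).
  by rewrite -!big_split.
under eq_bigr => u _ do under eq_bigr => v _ do rewrite split_l.
under eq_bigr => u _ do rewrite (sum_prod_mdig n (fun l => f l (mdig n u l))).
rewrite (sum_prod_mdig n (fun l x => \sum_(y < n l) f l x y)).
under eq_bigr => l _ do rewrite sum_dftC_shiftb_char //.
by rewrite big_split /= -natr_forall /phase expiN2pi_sum.
Qed.

Lemma sum_dftCn_shiftCn_conj k k' rho : (k < N)%N -> (k' < N)%N ->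
  \sum_(u < N) \sum_(v < N) dftCn k u * shiftCn rho u v * conjc (dftCn k' v) =
  (k == k')%:R * phase k rho.
Proof.
move=> k_lt k'_lt; have conjE v : conjc (dftCn k' v) = charCn (fun l => (mdig n k' l)%:Z) v.
  by rewrite conjc_prod; apply: eq_bigr => l _; rewrite conj_dftC.
under eq_bigr => u _ do under eq_bigr => v _ do rewrite conjE.
rewrite sum_dftCn_shiftCn_char; congr ((nat_of_bool _)%:R * _).
apply/forallP/eqP => [dvd_kk'|<- l]; last by rewrite subrr dvdz0.
by apply: (@mdig_inj _ n) => // l; apply/eqP; rewrite -(@dvdz_subn_eq (n l)) ?mdig_ltn ?dvd_kk'.
Qed.

Lemma sum_dftCn_shiftCn_dftCn k k' rho : (k < N)%N -> (k' < N)%N ->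
  \sum_(u < N) \sum_(v < N) dftCn k u * shiftCn rho u v * dftCn k' v =
  (k' == mneg n k)%:R * phase k rho.
Proof.
move=> k_lt k'_lt; have dftE v : dftCn k' v = charCn (fun l => - (mdig n k' l)%:Z) v.
  by apply: eq_bigr => l _; rewrite dftC_char.
under eq_bigr => u _ do under eq_bigr => v _ do rewrite dftE.
rewrite sum_dftCn_shiftCn_char -eq_mneg_dvdn //; congr ((nat_of_bool _)%:R * _).
by apply: eq_forallb => l; rewrite -opprD rpredN -PoszD dvdzE addnC.
Qed.

End MultiLevelDFT.

Arguments dftCn {R d}.
Arguments shiftCn {R d}.
Arguments charCn {R d}.
Arguments phase {R d}.

Lemma sum_natr_eq_mull (T : pzSemiRingType) m (w : nat) (f : 'I_m -> T) (w_lt : (w < m)%N) :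
  \sum_(u < m) (u == w :> nat)%:R * f u = f (Ordinal w_lt).
Proof.
rewrite (bigD1 (Ordinal w_lt)) //= eqxx mul1r big1 ?addr0 // => u u_neq.
by rewrite (_ : _ == _ = false) ?mul0r //; apply: contraNF u_neq => /eqP u_w; apply/eqP/val_inj.
Qed.

Lemma sum_natr_eq_mulr (T : pzSemiRingType) m (w : nat) (f : 'I_m -> T) (w_lt : (w < m)%N) :
  \sum_(u < m) f u * (u == w :> nat)%:R = f (Ordinal w_lt).
Proof.
rewrite (bigD1 (Ordinal w_lt)) //= eqxx mulr1 big1 ?addr0 // => u u_neq.
by rewrite (_ : _ == _ = false) ?mulr0 //; apply: contraNF u_neq => /eqP u_w; apply/eqP/val_inj.
Qed.

Lemma addmx_entry (V : nmodType) m q (A B : 'M[V]_(m, q)) i j : (A + B) i j = A i j + B i j.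
Proof. by rewrite mxE. Qed.

Lemma mulmx_scalar_entry (T : pzRingType) m q (A : 'M[T]_(m, q)) (c : T) i j :
  (A *m c%:M) i j = A i j * c.
Proof.
rewrite mxE (bigD1 j) //= big1 ?addr0 => [|k k_neq]; first by rewrite mxE eqxx mulr1n.
by rewrite mxE (negbTE k_neq) mulr0n mulr0.
Qed.

Section QuaternionMatrixEntries.
Variable R : realType.
Local Notation H := (quat R).
Local Notation C := R[i].

Lemma tens1_mulmx_entry N s r (G : 'M[H]_N) (M : 'M[H]_(N * s, r)) k a j :
  ((G *t (1%:M : 'M[H]_s)) *m M) (mxtens_index (k, a)) j =
  \sum_(u < N) G k u * M (mxtens_index (u, a)) j.
Proof.
rewrite mxE big_mxtens_index; apply: eq_bigr => u _.
under eq_bigr => a' _ do rewrite tensmxE mxE -mulrA.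
rewrite -big_distrr /= (bigD1 a) //= eqxx mul1r big1 ?addr0 // => a' a'_neq.
by rewrite eq_sym (negbTE a'_neq) mul0r.
Qed.

Lemma mulmx_adj_tens1_entry N t r (G : 'M[H]_N) (M : 'M[H]_(r, N * t)) i k' b :
  (M *m qadj (G *t (1%:M : 'M[H]_t))) i (mxtens_index (k', b)) =
  \sum_(v < N) M i (mxtens_index (v, b)) * qconj (G k' v).
Proof.
rewrite mxE big_mxtens_index; apply: eq_bigr => v _.
under eq_bigr => b' _ do rewrite /qadj mxE mxE tensmxE mxE qconjM qconj_nat.
rewrite (bigD1 b) //= eqxx mul1r big1 ?addr0 // => b' b'_neq.
by rewrite eq_sym (negbTE b'_neq) mul0r mulr0.
Qed.

(* [qj] conjugates what it moves past, so [D] loses its conjugate in the [qj]-part. *)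
Lemma qcplx_sandwichE (A B D : C) (x : H) :
  qcplx A * qcplx B * x * qcplx (conjc D) =
  qcplx (qsimplex x * (A * B * conjc D)) + qcplx (qperplex x * (A * B * D)) * qj.
Proof.
rewrite {1}(quat_cplxE x) mulrDr mulrDl -!mulrA qj_cplx conjcK !mulrA -!rmorphM.
by congr (qcplx _ + qcplx _ * _); ring.
Qed.

Lemma qcplx_real_i (c0 c1 : R) (z : C) :
  qcplx (c0%:C * z) + qcplx (c1%:C * z) * qi = qcplx ((c0 +i* c1) * z).
Proof.
rewrite -qcplx_i -rmorphM -rmorphD; congr qcplx.
have -> : c0 +i* c1 = c0%:C + c1%:C * 'i.
  by apply/eqP; rewrite eq_complex /=; apply/andP; split; apply/eqP; ring.
by rewrite mulrDl mulrAC.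
Qed.

End QuaternionMatrixEntries.

Section FourierBlocks.
Variables (R : realType) (d : nat) (n : 'I_d -> nat).
Hypothesis n_gt0 : forall l, (0 < n l)%N.
Variables (s t : nat) (F : seq {ffun 'I_d -> int}) (p : {ffun 'I_d -> int} -> 'M[quat R]_(s, t)).
Local Notation N := (Nn n).
Local Notation H := (quat R).
Local Notation UL := (Fn R n *t (1%:M : 'M[H]_s)).
Local Notation UR := (Fn R n *t (1%:M : 'M[H]_t)).
Local Notation AI := (An R n *t (1%:M : 'M[H]_t)).
Local Notation PiL := (Pperm R n *t (1%:M : 'M[H]_s)).
Local Notation PiR := (Pperm R n *t (1%:M : 'M[H]_t)).
Local Notation S l := (Shat n F p l).

Definition D1 (k : nat) : 'M[H]_(s, t) := S 0 k + S 1 k *m (qi%:M : 'M_t).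
Definition D2 (k : nat) : 'M[H]_(s, t) := (S 2 k + S 3 k *m (qi%:M : 'M_t)) *m (qj%:M : 'M_t).
Definition fblock (k k' : nat) : 'M[H]_(s, t) :=
  (if k == k' then D1 k else 0) + (if k' == mneg n k then D2 k else 0).

Lemma fblock_entry k k' a b : fblock k k' a b =
  (k == k')%:R * (S 0 k a b + S 1 k a b * qi) +
  (k' == mneg n k)%:R * ((S 2 k a b + S 3 k a b * qi) * qj).
Proof.
have zero_ab : (0 : 'M[H]_(s, t)) a b = 0 by rewrite mxE.
rewrite addmx_entry /D1 /D2; case: (k == k'); case: (k' == mneg n k);
  by rewrite ?zero_ab ?mulmx_scalar_entry ?addmx_entry ?mulmx_scalar_entry
             ?mul1r ?mul0r ?addr0 ?add0r.
Qed.

Lemma Shat_entry l k a b :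
  S l k a b = \sum_(rho <- F) qcplx ((qcomp l (p rho a b))%:C * phase n k rho).
Proof. by rewrite mxE; apply: eq_bigr => rho _; rewrite qexpi_cplx -qcplx_real -rmorphM. Qed.

Lemma UCU_entry_sum (k k' : 'I_N) a b :
  (UL *m Cn n F p *m qadj UR) (mxtens_index (k, a)) (mxtens_index (k', b)) =
  \sum_(rho <- F)
    (qcplx (qsimplex (p rho a b) * ((k == k' :> nat)%:R * phase n k rho)) +
     qcplx (qperplex (p rho a b) * ((k' == mneg n k :> nat)%:R * phase n k rho)) * qj).
Proof.
rewrite mulmx_adj_tens1_entry; under eq_bigr => v _ do rewrite tens1_mulmx_entry.
transitivity (\sum_(v < N) \sum_(u < N) \sum_(rho <- F)
   (qcplx (qsimplex (p rho a b) * (dftCn n k u * shiftCn n rho u v * conjc (dftCn n k' v))) +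
    qcplx (qperplex (p rho a b) * (dftCn n k u * shiftCn n rho u v * dftCn n k' v)) * qj)).
  apply: eq_bigr => v _; rewrite big_distrl /=; apply: eq_bigr => u _.
  rewrite /Cn summxE big_distrr big_distrl /=; apply: eq_bigr => rho _.
  by rewrite tensmxE !Fn_cplx Pshift_cplx qconj_cplx [X in X * _ = _]mulrA qcplx_sandwichE.
rewrite exchange_big /=; under eq_bigr => u _ do rewrite exchange_big /=.
rewrite exchange_big /=; apply: eq_bigr => rho _.
rewrite -sum_dftCn_shiftCn_conj // -sum_dftCn_shiftCn_dftCn //.
rewrite !big_distrr !rmorph_sum big_distrl -big_split /=; apply: eq_bigr => u _.
by rewrite !big_distrr !rmorph_sum big_distrl -big_split.
Qed.

Lemma UCU_entry (k k' : 'I_N) a b :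
  (UL *m Cn n F p *m qadj UR) (mxtens_index (k, a)) (mxtens_index (k', b)) = fblock k k' a b.
Proof.
rewrite UCU_entry_sum big_split /= fblock_entry !Shat_entry; congr (_ + _).
  rewrite big_distrl -big_split big_distrr /=; apply: eq_bigr => rho _.
  by rewrite qcplx_real_i -(rmorph_nat qcplx) -rmorphM; congr qcplx; rewrite /qsimplex /=; ring.
rewrite big_distrl -big_split big_distrl big_distrr /=; apply: eq_bigr => rho _.
rewrite qcplx_real_i -(rmorph_nat qcplx) [RHS]mulrA -rmorphM.
by congr (qcplx _ * _); rewrite /qperplex /=; ring.
Qed.

Lemma blockdiag_entry (B : nat -> 'M[H]_(s, t)) (k k' : 'I_N) a b :
  blockdiag n B (mxtens_index (k, a)) (mxtens_index (k', b)) = (k == k')%:R * B k a b.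
Proof.
rewrite summxE (bigD1 k) //= big1 => [|k'' k''_neq]; last first.
  by rewrite tensmxE mxE eq_sym (negbTE k''_neq) mul0r.
by rewrite tensmxE mxE eqxx eq_sym addr0.
Qed.

Lemma An_tens1_entry (w k' : 'I_N) (b' b : 'I_t) :
  AI (mxtens_index (w, b')) (mxtens_index (k', b)) = (k' == mneg n w :> nat)%:R * (b' == b)%:R.
Proof. by rewrite tensmxE !mxE -eq_mneg_dvdn. Qed.

Lemma blockdiag_An_entry (B : nat -> 'M[H]_(s, t)) (k k' : 'I_N) a b :
  (blockdiag n B *m AI) (mxtens_index (k, a)) (mxtens_index (k', b)) =
  B k a b * (k' == mneg n k :> nat)%:R.
Proof.
rewrite mxE big_mxtens_index (bigD1 k) //= [X in _ + X]big1 => [|w w_neq]; last first.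
  by rewrite big1 // => b' _; rewrite blockdiag_entry eq_sym (negbTE w_neq) mul0r mul0r.
rewrite addr0 (bigD1 b) //= [X in _ + X]big1 => [|b' b'_neq]; last first.
  by rewrite An_tens1_entry (negbTE b'_neq) mulr0 mulr0.
by rewrite blockdiag_entry An_tens1_entry !eqxx mul1r mulr1 addr0.
Qed.

Lemma Lam_sum_entry (k k' : 'I_N) a b :
  (blockdiag n (S 0) + blockdiag n (S 1) *m qi%:M +
   blockdiag n (S 2) *m AI *m qj%:M + blockdiag n (S 3) *m AI *m qk%:M)
   (mxtens_index (k, a)) (mxtens_index (k', b)) = fblock k k' a b.
Proof.
rewrite fblock_entry !addmx_entry !mulmx_scalar_entry !blockdiag_An_entry !blockdiag_entry.
rewrite -[k == k']/(k == k' :> nat); case: (k == k' :> nat); case: (k' == mneg n k :> nat);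
  by rewrite ?mul1r ?mul0r ?mulr1 ?mulr0 ?add0r ?addr0 ?mulrDl ?qk_ij ?mulrA ?mul0r ?addr0 ?addrA.
Qed.

Lemma Pperm_entry (m u : 'I_N) : Pperm R n m u = (u == nth 0%N (Pord n) m :> nat)%:R.
Proof. by rewrite mxE. Qed.

Lemma nth_Pord_ltn (m : 'I_N) : (nth 0%N (Pord n) m < N)%N.
Proof. by rewrite -(mem_Pord n_gt0) mem_nth // size_Pord. Qed.

Lemma PUCUP_entry (m m' : 'I_N) a b :
  (PiL *m UL *m Cn n F p *m qadj UR *m qadj PiR)
     (mxtens_index (m, a)) (mxtens_index (m', b)) =
  fblock (nth 0%N (Pord n) m) (nth 0%N (Pord n) m') a b.
Proof.
rewrite -[_ *m _ *m Cn n F p]mulmxA -[_ *m (_ *m Cn n F p) *m _]mulmxA mulmx_adj_tens1_entry.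
under eq_bigr => v _ do rewrite tens1_mulmx_entry.
under eq_bigr => v _ do under eq_bigr => u _ do rewrite Pperm_entry.
under eq_bigr => v _ do rewrite (sum_natr_eq_mull _ (nth_Pord_ltn m)) Pperm_entry qconj_nat.
by rewrite (sum_natr_eq_mulr _ (nth_Pord_ltn m')) UCU_entry.
Qed.

Lemma fblock_neq0 x y : fblock x y != 0 -> (x == y) || (y == mneg n x).
Proof.
by apply: contraR; rewrite negb_or /fblock => /andP[/negbTE-> /negbTE->]; rewrite addr0.
Qed.

Definition fgroups : seq (nat + nat) := map inl (Fixl n) ++ map inr (Kl n).

Definition fgroup (g : nat + nat) : seq nat :=
  match g with inl k => [:: k] | inr k => [:: k; mneg n k] end.

Definition fgroup_block (g : nat + nat) : nat * (nat -> nat -> 'M[H]_(s, t)) :=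
  match g with
  | inl k => (1%N, fun _ _ => D1 k + D2 k)
  | inr k => (2%N, fun e e' => if e == 0%N then (if e' == 0%N then D1 k else D2 k)
                              else (if e' == 0%N then D2 (mneg n k) else D1 (mneg n k)))
  end.

Lemma flatten_fgroups : flatten (map fgroup fgroups) = Pord n.
Proof. by rewrite map_cat flatten_cat -!map_comp flatten_seq1. Qed.

Lemma fgroup_blockE : {in fgroups, forall g, (fgroup_block g).1 = size (fgroup g) /\
  forall e e', (e < size (fgroup g))%N -> (e' < size (fgroup g))%N ->
    (fgroup_block g).2 e e' = fblock (nth 0%N (fgroup g) e) (nth 0%N (fgroup g) e')}.
Proof.
move=> [] k; rewrite mem_cat => /orP[] /mapP[k' k'_in] // [->]; split=> //.
  move: k'_in; rewrite mem_Fixl => /andP[k_lt fix_k].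
  have mneg_k : mneg n k' = k' by apply/eqP; rewrite mneg_fixE.
  by case=> [|//] [|//] _ _; rewrite /fblock /= mneg_k eqxx.
move: k'_in; rewrite mem_Kl => /and3P[k_lt not_fix _].
have k_neq : (k' == mneg n k') = false by rewrite eq_sym mneg_fixE // (negbTE not_fix).
have mk_neq : (mneg n k' == k') = false by rewrite mneg_fixE // (negbTE not_fix).
case=> [|[|//]] [|[|//]] _ _ /=;
  by rewrite /fblock ?mnegK // ?eqxx ?k_neq ?mk_neq ?addr0 ?add0r.
Qed.

Lemma fblock_supp x y : x \in Pord n -> fblock x y != 0 ->
  has (fun g => (x \in fgroup g) && (y \in fgroup g)) fgroups.
Proof.
move=> x_in /fblock_neq0 xy; have x_lt : (x < N)%N by rewrite -(mem_Pord n_gt0).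
rewrite has_cat !has_map; apply/orP.
move: x_in; rewrite /Pord mem_cat (perm_mem (perm_flatten_pairs _ _)) mem_cat.
case/or3P => [x_fix|x_K|/mapP[k k_K x_eq]]; last subst x.
- left; apply/hasP; exists x => //=; rewrite !inE eqxx.
  move: x_fix; rewrite mem_Fixl => /andP[_]; rewrite -mneg_fixE // => /eqP mneg_x.
  by case/orP: xy => [/eqP <-|/eqP ->]; rewrite ?mneg_x eqxx.
- right; apply/hasP; exists x => //=; rewrite !inE eqxx.
  by case/orP: xy => [/eqP <-|/eqP ->]; rewrite eqxx ?orbT.
- right; apply/hasP; exists k => //=; rewrite !inE eqxx orbT.
  have k_lt : (k < N)%N by move: k_K; rewrite mem_Kl => /andP[].
  by case/orP: xy => [/eqP <-|/eqP ->]; rewrite ?mnegK ?eqxx ?orbT.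
Qed.

Lemma bdsum_blocks_entry (m m' : nat) a b : (m < N)%N -> (m' < N)%N ->
  bdsum_entry
    ([seq (1%N, fun _ _ : nat => D1 k + D2 k) | k <- Fixl n] ++
     [seq (2%N, fun e e' : nat =>
            if e == 0%N then (if e' == 0%N then D1 k else D2 k)
            else (if e' == 0%N then D2 (mneg n k) else D1 (mneg n k))) | k <- Kl n])
    m a m' b = fblock (nth 0%N (Pord n) m) (nth 0%N (Pord n) m') a b.
Proof.
have -> : [seq (1%N, fun _ _ : nat => D1 k + D2 k) | k <- Fixl n] ++
     [seq (2%N, fun e e' : nat =>
            if e == 0%N then (if e' == 0%N then D1 k else D2 k)
            else (if e' == 0%N then D2 (mneg n k) else D1 (mneg n k))) | k <- Kl n] =
     map fgroup_block fgroups by rewrite map_cat -!map_comp.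
rewrite -flatten_fgroups => m_lt m'_lt.
apply: bdsum_entry_map; rewrite ?flatten_fgroups ?size_Pord ?Pord_uniq //.
- exact: fgroup_blockE.
- by move=> x y x_in _; apply: fblock_supp.
Qed.

End FourierBlocks.

Theorem mainTheorem16 (R : realType) (d : nat) (n : 'I_d -> nat)
  (n_gt0 : forall l, (0 < n l)%N) (s t : nat)
  (F : seq {ffun 'I_d -> int}) (F_uniq : uniq F)
  (p : {ffun 'I_d -> int} -> 'M[quat R]_(s, t)) :
  let N := Nn n in
  let UL : 'M[quat R]_(N * s) := Fn R n *t (1%:M : 'M[quat R]_s) in
  let UR : 'M[quat R]_(N * t) := Fn R n *t (1%:M : 'M[quat R]_t) in
  let C := Cn n F p in
  let Lam l := blockdiag n (Shat n F p l) in
  let AI : 'M[quat R]_(N * t) := An R n *t (1%:M : 'M[quat R]_t) in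
  let D1 k := Shat n F p 0 k + Shat n F p 1 k *m (qi%:M : 'M_t) in
  let D2 k := (Shat n F p 2 k + Shat n F p 3 k *m (qi%:M : 'M_t)) *m (qj%:M : 'M_t) in
  let PiL : 'M[quat R]_(N * s) := Pperm R n *t (1%:M : 'M[quat R]_s) in
  let PiR : 'M[quat R]_(N * t) := Pperm R n *t (1%:M : 'M[quat R]_t) in
  let blocks :=
    [seq (1%N, fun _ _ : nat => D1 k + D2 k) | k <- Fixl n] ++
    [seq (2%N, fun e e' : nat =>
            if e == 0%N then (if e' == 0%N then D1 k else D2 k)
            else (if e' == 0%N then D2 (mneg n k) else D1 (mneg n k))) | k <- Kl n] in
  UL *m C *m qadj UR =
    Lam 0%N + Lam 1%N *m qi%:M + Lam 2%N *m AI *m qj%:M + Lam 3%N *m AI *m qk%:M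
  /\
  PiL *m UL *m C *m qadj UR *m qadj PiR = bdsum blocks N N.
Proof.
move=> N UL UR C Lam AI D1k D2k PiL PiR blocks.
split; apply/matrixP => i j; case: (mxtens_indexP i) => k a; case: (mxtens_indexP j) => k' b.
  by rewrite (UCU_entry n_gt0) Lam_sum_entry.
rewrite (PUCUP_entry n_gt0) [RHS]mxE !mxtens_indexK.
by rewrite bdsum_blocks_entry ?nth_Pord_ltn.
Qed.
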